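(* Let $K=\{x\in[0,1]^n: g_\ell(x)\ge 0,\ \ell=1,\dots,m\}$ with affine $g_\ell$, $V=[n]$, $t>1$, $y\in\mathrm{La}^t(K)$, $k<t$ a positive integer and $S\subseteq V$ such that $y_I=0$ for every $I\in\mathcal P_{2t}(V)$ with $|I\cap S|\ge k$. Let $y'$ be the extension of $y$ (so $y'_I=y_I$ if $|I|\le 2t$ and $y'_I=0$ otherwise), and for $X\subseteq S$ let $z^X_I=\sum_{J:\,X\subseteq J\subseteq S}(-1)^{|J\setminus X|}y'_{I\cup J}$ for all $I\subseteq V$. Let $\mathcal T_1=\{A\subseteq V: |A\setminus S|\le t-k\}$ and $\mathcal T_2=\{B\subseteq V:|B\setminus S|<t-k\}$. Then for every $X\subseteq S$: $M_{\mathcal T_1}(z^X)\succeq0$, and $M_{\mathcal T_2}(g_\ell*z^X)\succeq 0$ for every $\ell$.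
   Context: Notation: $\mathcal P_t(U)$ is the set of subsets of $U$ of size at most $t$. For a collection $\mathcal T$ of subsets and a vector $y$ indexed by subsets, $M_{\mathcal T}(y)$ is the symmetric matrix indexed by $\mathcal T$ with $(I,J)$-entry $y_{I\cup J}$. For an affine $g(x)=b+\sum_{j}a_jx_j$, $(g*y)_I=b\,y_I+\sum_j a_j y_{I\cup\{j\}}$. The $t$-th Lasserre lifted polytope $\mathrm{La}^t(K)$ of $K=\{x\in[0,1]^n:g_\ell(x)\ge0,\ \ell=1,\dots,m\}$ is the set of $y\in[0,1]^{\mathcal P_{2t}(V)}$ with $y_\emptyset=1$, $M_{\mathcal P_t(V)}(y)\succeq0$, and $M_{\mathcal P_{t-1}(V)}(g_\ell*y)\succeq0$ for all $\ell$. *)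

From HB Require Import structures.
From mathcomp Require Import all_boot all_order all_algebra.
Set Implicit Arguments. Unset Strict Implicit. Unset Printing Implicit Defensive.
Import Order.TTheory GRing.Theory Num.Theory.
Local Open Scope ring_scope.

Section Lasserre.
Variables (R : realFieldType) (n : nat).
Notation sub := {set 'I_n}.

Definition Pt (t : nat) : {set sub} := [set I : sub | (#|I| <= t)%N].

Definition momM (y : sub -> R) (I J : sub) : R := y (I :|: J).

Definition psd_on (T : {set sub}) (M : sub -> sub -> R) : Prop :=
  forall x : sub -> R, 0 <= \sum_(I in T) \sum_(J in T) x I * M I J * x J.

(* affine g(x) = b + sum_j a_j x_j acting on y: (g*y)_I = b y_I + sum_j a_j y_{I u {j}} *)
Definition gstar (b : R) (a : 'I_n -> R) (y : sub -> R) (I : sub) : R :=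
  b * y I + \sum_(j < n) a j * y (j |: I).

(* La^t(K) for K = {x in [0,1]^n : g_l(x) >= 0}, g_l(x) = b l + sum_j a l j x_j *)
Definition inLa (m : nat) (b : 'I_m -> R) (a : 'I_m -> 'I_n -> R)
    (t : nat) (y : sub -> R) : Prop :=
  (forall I : sub, I \in Pt t.*2 -> 0 <= y I <= 1) /\
  y set0 = 1 /\
  psd_on (Pt t) (momM y) /\
  (forall l : 'I_m, psd_on (Pt t.-1) (momM (gstar (b l) (a l) y))).

Definition yext (t : nat) (y : sub -> R) (I : sub) : R :=
  if (#|I| <= t.*2)%N then y I else 0.

Definition zX (t : nat) (y : sub -> R) (S X : sub) (I : sub) : R :=
  \sum_(J : sub | (X \subset J) && (J \subset S))
     (-1) ^+ #|J :\: X| * yext t y (I :|: J).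

End Lasserre.

(* A function [c] on subsets is idempotent for the union convolution when
   [c J = sum_{J1 u J2 = J} c J1 c J2].  The function
   [c J = [X <= J <= S] (-1)^|J \ X|] is such, being a product over the
   coordinates of idempotent one-variable factors.  Hence
   [z^X_I = sum_J c J y'_{I u J} = sum_{J1, J2} c J1 c J2 y'_{I u J1 u J2}],
   so the quadratic form of [M_T(z^X)] at [x] is the quadratic form of the
   full moment matrix of [y'] at the push-forward
   [v I = sum_{A u J = I} x A c J].  Since [y'] vanishes on sets meeting [S]
   in at least [k] points, [v] may be cut down to sets meeting [S] in fewer
   than [k] points; these have at most [(t - k) + (k - 1)] elements, so the
   form is one of [M_{P_t}(y)], which is positive semidefinite.  The
   localizing matrices are handled identically, since [g * _] commutes with
   the union convolution. *)
From HB Require Import structures.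
From mathcomp Require Import all_boot all_order all_algebra.
From mathcomp Require Import ring zify.
Import Order.TTheory GRing.Theory Num.Theory.
Local Open Scope ring_scope.
Set Implicit Arguments. Unset Strict Implicit. Unset Printing Implicit Defensive.

Section UnionConvolution.
Variables (R : realFieldType) (n : nat).
Implicit Types (c x y : {set 'I_n} -> R) (T P : {set {set 'I_n}}).
Implicit Types (I J A B S X : {set 'I_n}).

Definition qform T (M : {set 'I_n} -> {set 'I_n} -> R) x : R :=
  \sum_(I in T) \sum_(J in T) x I * M I J * x J.

Lemma psd_onP T M : psd_on T M <-> forall x, 0 <= qform T M x.
Proof. by []. Qed.

Lemma sum_setT (F : {set 'I_n} -> R) :
  \sum_(I in [set: {set 'I_n}]) F I = \sum_I F I.
Proof. by apply: eq_bigl => I; rewrite in_setT. Qed.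

Lemma sum_indicatorE E (F : {set 'I_n} -> R) : \sum_I (E == I)%:R * F I = F E.
Proof.
rewrite (bigD1 E) //= eqxx mul1r big1 ?addr0 // => I /negPf.
by rewrite eq_sym => ->; rewrite mul0r.
Qed.

Definition union_idem c : Prop :=
  forall J, \sum_J1 \sum_J2 ((J1 :|: J2) == J)%:R * (c J1 * c J2) = c J.

Definition shift c y I : R := \sum_J c J * y (I :|: J).

Lemma shift_idem c y I : union_idem c ->
  shift c y I = \sum_J1 \sum_J2 c J1 * c J2 * y (I :|: (J1 :|: J2)).
Proof.
move=> idem_c; rewrite /shift.
under eq_bigr do rewrite -idem_c mulr_suml.
rewrite exchange_big; apply: eq_bigr => J1 _.
under eq_bigr do rewrite mulr_suml.
rewrite exchange_big; apply: eq_bigr => J2 _.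
by under eq_bigr do rewrite -mulrA; rewrite sum_indicatorE.
Qed.

Lemma gstar_shift b (a : 'I_n -> R) c y :
  gstar b a (shift c y) =1 shift c (gstar b a y).
Proof.
move=> I; rewrite /gstar /shift mulr_sumr.
under [X in _ + X]eq_bigr do rewrite mulr_sumr.
rewrite exchange_big -big_split; apply: eq_bigr => J _ /=.
rewrite mulrDr mulr_sumr mulrCA; congr (_ + _).
by apply: eq_bigr => j _; rewrite mulrCA setUA.
Qed.

Definition pushU T x c I : R :=
  \sum_(A in T) \sum_J ((A :|: J) == I)%:R * (x A * c J).

Lemma sum_pushU T x c (F : {set 'I_n} -> R) :
  \sum_I pushU T x c I * F I = \sum_(A in T) \sum_J x A * c J * F (A :|: J).
Proof.
under eq_bigr do rewrite /pushU mulr_suml; rewrite exchange_big.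
apply: eq_bigr => A _; under eq_bigr do rewrite mulr_suml.
rewrite exchange_big; apply: eq_bigr => J _.
by under eq_bigr => i _ do rewrite -mulrA; rewrite sum_indicatorE.
Qed.

Lemma qform_shift T c y x : union_idem c ->
  qform T (momM (shift c y)) x = qform [set: _] (momM y) (pushU T x c).
Proof.
move=> idem_c; set v := pushU T x c.
transitivity (\sum_I1 v I1 * \sum_I2 v I2 * y (I1 :|: I2)); last first.
  rewrite /qform /momM sum_setT; apply: eq_bigr => I1 _.
  rewrite sum_setT mulr_sumr; apply: eq_bigr => I2 _.
  by rewrite mulrA mulrAC.
rewrite sum_pushU; apply: eq_bigr => A _.
under [RHS]eq_bigr do rewrite sum_pushU mulr_sumr.
rewrite [RHS]exchange_big; apply: eq_bigr => B _.
rewrite /momM shift_idem // mulr_sumr mulr_suml; apply: eq_bigr => J1 _.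
rewrite mulr_sumr mulr_suml mulr_sumr; apply: eq_bigr => J2 _.
by rewrite setUACA; ring.
Qed.

Lemma pushU_out T x c (Q : pred {set 'I_n}) :
  (forall A J, A \in T -> c J != 0 -> Q (A :|: J)) ->
  forall I, ~~ Q I -> pushU T x c I = 0.
Proof.
move=> Q_img I notQI; apply: big1 => A AT; apply: big1 => J _.
have [->|cJ] := eqVneq (c J) 0; first by rewrite !mulr0.
have [AJI|] := eqVneq (A :|: J) I; last by rewrite mul0r.
by move: notQI; rewrite -AJI Q_img.
Qed.

Lemma card_setU_subset S A J : J \subset S ->
  #|A :|: J| = (#|(A :|: J) :&: S| + #|A :\: S|)%N.
Proof.
move=> JS; rewrite -(cardsID S (A :|: J)) setDUl.
by rewrite (_ : J :\: S = set0) ?setU0 //; apply/eqP; rewrite setD_eq0.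
Qed.

Lemma qform_restrict T M x (D : pred {set 'I_n}) :
  (forall I J, ~~ D I || ~~ D J -> M I J = 0) ->
  qform T M x = qform T M (fun I => if D I then x I else 0).
Proof.
move=> M0; apply: eq_bigr => I _; apply: eq_bigr => J _.
by case: (boolP (D I)) => DI; case: (boolP (D J)) => DJ;
  rewrite // M0 ?DI ?DJ ?orbT ?mulr0 ?mul0r.
Qed.

Lemma qform_support P M M0 x :
  (forall I, I \notin P -> x I = 0) ->
  {in P &, forall I J, M I J = M0 I J} ->
  qform [set: _] M x = qform P M0 x.
Proof.
move=> x0 MM0; rewrite /qform sum_setT [RHS]big_mkcond; apply: eq_bigr => I _.
case: ifP => [IP|/negbT/x0 ->]; last by apply: big1 => J _; rewrite !mul0r.
rewrite sum_setT [RHS]big_mkcond; apply: eq_bigr => J _.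
case: ifP => [JP|/negbT/x0 ->]; [by rewrite (MM0 I J) | exact: mulr0].
Qed.

Lemma sum_set_ffun (F : {set 'I_n} -> R) :
  \sum_J F J = \sum_(f : {ffun 'I_n -> bool}) F [set i | f i].
Proof.
rewrite (reindex (fun f : {ffun 'I_n -> bool} => [set i | f i])) //.
exists (fun J => [ffun i => i \in J]) => [f _|J _].
  by apply/ffunP => i; rewrite ffunE inE.
by apply/setP => i; rewrite inE ffunE.
Qed.

Lemma prod_idem_union (h : 'I_n -> bool -> R) :
  (forall i b,
     \sum_b1 \sum_b2 ((b1 || b2) == b)%:R * (h i b1 * h i b2) = h i b) ->
  union_idem (fun J => \prod_i h i (i \in J)).
Proof.
move=> idem_h J; rewrite -[RHS](eq_bigr _ (fun i _ => idem_h i _)).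
rewrite bigA_distr_bigA sum_set_ffun; apply: eq_bigr => f1 _.
rewrite bigA_distr_bigA sum_set_ffun; apply: eq_bigr => f2 _.
rewrite big_split /= big_split /=; congr (_ * (_ * _)); last 2 first.
- by apply: eq_bigr => i _; rewrite inE.
- by apply: eq_bigr => i _; rewrite inE.
have [/eqP eqJ|neqJ] := boolP ([set i | f1 i] :|: [set i | f2 i] == J).
  by rewrite big1 // => i _; rewrite -eqJ !inE eqxx.
have [i] : exists i, (f1 i || f2 i) != (i \in J).
  by apply/existsP; apply: contraNT neqJ => /existsPn same; apply/eqP/setP => i;
     rewrite !inE; apply/eqP/negPn.
by move=> /negPf fiJ; rewrite (bigD1 i) //= fiJ mul0r.
Qed.

Lemma psd_on_shift S k r p T c (Y Y0 : {set 'I_n} -> R) :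
  (r + k <= p.+1)%N -> union_idem c -> (forall J, c J != 0 -> J \subset S) ->
  (forall A, A \in T -> #|A :\: S| <= r)%N ->
  (forall I, (k <= #|I :&: S|)%N -> Y I = 0) ->
  (forall I J, (#|I| <= p)%N -> (#|J| <= p)%N -> Y (I :|: J) = Y0 (I :|: J)) ->
  psd_on (Pt n p) (momM Y0) -> psd_on T (momM (shift c Y)).
Proof.
move=> rk_p idem_c c_supp T_small Y0S YY0 psdY0; apply/psd_onP => x.
rewrite qform_shift //.
rewrite (@qform_restrict _ _ _ (fun I => #|I :&: S| < k)%N); last first.
  move=> I J; rewrite -!leqNgt /momM => large; apply: Y0S.
  by case/orP: large => /leq_trans; apply; apply/subset_leq_card/setSI;
    [apply: subsetUl | apply: subsetUr].
rewrite (@qform_support (Pt n p) _ (momM Y0)); first exact: psdY0.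
  move=> I; rewrite inE => I_large; case: ifP => // IS_small.
  apply: (@pushU_out _ _ _ (fun I => (#|I :&: S| < k) ==> (#|I| <= p))%N);
    last by rewrite IS_small.
  move=> A J /T_small AS_small /c_supp JS; apply/implyP => AJS_small.
  rewrite (@card_setU_subset S A J JS) -ltnS; apply: (leq_trans _ rk_p).
  by rewrite -addSn [(r + k)%N]addnC leq_add.
by move=> I J; rewrite !inE /momM => Ip Jp; apply: YY0.
Qed.

Lemma eq_psd_on_momM T (f g : {set 'I_n} -> R) :
  f =1 g -> psd_on T (momM g) -> psd_on T (momM f).
Proof.
move=> fg psd_g x; rewrite /momM.
by under eq_bigr do under eq_bigr do rewrite fg; exact: psd_g.
Qed.

Definition zcoef S X J : R :=
  if (X \subset J) && (J \subset S) then (-1) ^+ #|J :\: X| else 0.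

Lemma zX_shift t y S X : zX t y S X =1 shift (zcoef S X) (yext t y).
Proof.
move=> I; rewrite /zX /shift big_mkcond; apply: eq_bigr => J _.
by rewrite /zcoef; case: ifP; rewrite ?mul0r.
Qed.

Lemma zcoef_supp S X J : zcoef S X J != 0 -> J \subset S.
Proof. by rewrite /zcoef; case: ifP => [/andP[]|_]; rewrite ?eqxx. Qed.

Definition zfactor S X i (b : bool) : R :=
  if b then (if i \in S then (if i \in X then 1 else -1) else 0)
  else (if i \in X then 0 else 1).

Lemma zcoef_prod S X J : zcoef S X J = \prod_i zfactor S X i (i \in J).
Proof.
rewrite /zcoef; case: ifP => [/andP [XJ JS]|].
  rewrite -prodr_const big_mkcond /=; apply: eq_bigr => i _.
  rewrite /zfactor !inE.
  case iJ: (i \in J); case iX: (i \in X); rewrite ?(subsetP JS) //.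
  by rewrite (subsetP XJ) in iJ.
move/negbT; rewrite negb_and => /orP [/subsetPn [i iX iJ]|/subsetPn [i iJ iS]].
  by rewrite (bigD1 i) //= /zfactor (negPf iJ) iX mul0r.
by rewrite (bigD1 i) //= /zfactor iJ (negPf iS) mul0r.
Qed.

Lemma zfactor_idem S X i b :
  \sum_b1 \sum_b2 ((b1 || b2) == b)%:R * (zfactor S X i b1 * zfactor S X i b2)
  = zfactor S X i b.
Proof.
rewrite /zfactor !big_bool /=.
by case: b; case: (i \in S); case: (i \in X) => /=; ring.
Qed.

Lemma union_idem_zcoef S X : union_idem (zcoef S X).
Proof.
move=> J; under eq_bigr do under eq_bigr do rewrite !zcoef_prod.
by rewrite zcoef_prod; apply: prod_idem_union => i b; apply: zfactor_idem.
Qed.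

Lemma gstar_eq0 b (a : 'I_n -> R) S k (Y : {set 'I_n} -> R) I :
  (forall J, (k <= #|J :&: S|)%N -> Y J = 0) ->
  (k <= #|I :&: S|)%N -> gstar b a Y I = 0.
Proof.
move=> Y0 kI; rewrite /gstar Y0 // mulr0 add0r big1 // => j _.
rewrite Y0 ?mulr0 //; apply: leq_trans kI _.
by apply/subset_leq_card/setSI/subsetUr.
Qed.

Lemma gstar_yext b (a : 'I_n -> R) t y I :
  (#|I| < t.*2)%N -> gstar b a (yext t y) I = gstar b a y I.
Proof.
move=> It; rewrite /gstar /yext (ltnW It); congr (_ + _).
apply: eq_bigr => j _; rewrite cardsU1 (leq_trans _ It) //.
by rewrite -add1n leq_add2r leq_b1.
Qed.

End UnionConvolution.

Theorem mainTheorem7 (R : realFieldType) (n m : nat)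
    (b : 'I_m -> R) (a : 'I_m -> 'I_n -> R)
    (t : nat) (ht : (1 < t)%N) (y : {set 'I_n} -> R)
    (hy : inLa b a t y)
    (k : nat) (hk0 : (0 < k)%N) (hkt : (k < t)%N)
    (S : {set 'I_n})
    (hS : forall I : {set 'I_n}, I \in Pt n t.*2 -> (k <= #|I :&: S|)%N -> y I = 0) :
  forall X : {set 'I_n}, X \subset S ->
    psd_on [set A : {set 'I_n} | (#|A :\: S| <= t - k)%N] (momM (zX t y S X)) /\
    (forall l : 'I_m,
       psd_on [set B : {set 'I_n} | (#|B :\: S| < t - k)%N]
              (momM (gstar (b l) (a l) (zX t y S X)))).
Proof.
move=> X _; have [_ [_ [psd_y psd_gy]]] := hy.
have yext0 I : (k <= #|I :&: S|)%N -> yext t y I = 0.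
  by rewrite /yext; case: ifP => // It; apply: hS; rewrite inE.
have card_setU_le p (I J : {set 'I_n}) :
    (#|I| <= p -> #|J| <= p -> #|I :|: J| <= p.*2)%N.
  move=> Ip Jp; apply: leq_trans (leq_card_setU I J).1 _.
  by rewrite -addnn leq_add.
have zcoef_idem := union_idem_zcoef R S X.
have zcoef_S := @zcoef_supp R n S X.
split => [|l].
  apply: (eq_psd_on_momM (zX_shift t y S X)).
  apply: (psd_on_shift (r := t - k) _ zcoef_idem zcoef_S _ yext0 _ psd_y).
  - by lia.
  - by move=> A; rewrite inE.
  by move=> I J Ip Jp; rewrite /yext card_setU_le.
have gstar_zX : gstar (b l) (a l) (zX t y S X) =1
    shift (zcoef R S X) (gstar (b l) (a l) (yext t y)).
  move=> I; rewrite -gstar_shift /gstar zX_shift.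
  by under eq_bigr do rewrite zX_shift.
apply: (eq_psd_on_momM gstar_zX).
apply: (psd_on_shift (k := k) (r := (t - k).-1) _ zcoef_idem zcoef_S _ _ _
          (psd_gy l)).
- by lia.
- by move=> B; rewrite inE; lia.
- by move=> I; apply: gstar_eq0.
move=> I J Ip Jp; apply: gstar_yext.
by apply: leq_ltn_trans (card_setU_le _ _ _ Ip Jp) _; lia.
Qed.
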